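(* Let $s$ be a real number with $\frac32<s\le 2$, let $\alpha,\beta>0$ be fixed, and let $K>0$. Suppose that for each $n$ (in an infinite set of natural numbers) $P_n\subset[0,1]^2$ is a set of $n$ points that is $s$-adaptable with constant $K$. Then there exist constants $C,N>0$, independent of $n$, such that for all such $n>N$, $$|\Pi_{\alpha,\beta}(P_n)|\le C\, n^{\frac43+\frac1s}\log n .$$
   Context: For a finite set $P\subset\mathbb R^2$ and real numbers $\alpha,\beta$, define the set of ordered triples $$\Pi_{\alpha,\beta}(P)=\{(p,q,r)\in P\times P\times P:\ p\cdot q=\alpha \text{ and } p\cdot r=\beta\},$$ where $\cdot$ is the standard dot product on $\mathbb R^2$ (the points $p,q,r$ need not be distinct). A set $P\subset[0,1]^2$ of $n$ points is called $s$-adaptable with constant $K$ if it satisfies (energy) $\displaystyle \frac{1}{\binom n2}\sum_{p,q\in P,\ p\neq q}|p-q|^{-s}\le K$, and (separation) $\min\{|p-q|:\ p,q\in P,\ p\neq q\}\ge n^{-1/s}$, where $|\cdot|$ is the Euclidean norm. *)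

From Stdlib Require Import Reals Lra List Bool.
Import ListNotations.
Open Scope R_scope.
Local Open Scope bool_scope.

Definition pt := (R * R)%type.

Definition dot (p q : pt) : R := fst p * fst q + snd p * snd q.

Definition norm2 (p q : pt) : R :=
  sqrt ((fst p - fst q) ^ 2 + (snd p - snd q) ^ 2).

Definition Reqb (a b : R) : bool := if Req_EM_T a b then true else false.

Definition pt_eqb (p q : pt) : bool := Reqb (fst p) (fst q) && Reqb (snd p) (snd q).

Definition Pi_set (alpha beta : R) (P : list pt) : list (pt * pt * pt) :=
  filter (fun t => match t with (p, q, r) => Reqb (dot p q) alpha && Reqb (dot p r) beta end)
         (list_prod (list_prod P P) P).

Definition Pi_card (alpha beta : R) (P : list pt) : nat := length (Pi_set alpha beta P).

Definition energy_sum (s : R) (P : list pt) : R :=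
  fold_right Rplus 0
    (map (fun pq => if pt_eqb (fst pq) (snd pq) then 0 else Rpower (norm2 (fst pq) (snd pq)) (- s))
         (list_prod P P)).

Definition in_unit_square (p : pt) : Prop := 0 <= fst p <= 1 /\ 0 <= snd p <= 1.

Definition s_adaptable (s K : R) (n : nat) (P : list pt) : Prop :=
  NoDup P /\ length P = n /\ (forall p, In p P -> in_unit_square p) /\
  (/ C n 2) * energy_sum s P <= K /\
  (forall p q, In p P -> In q P -> p <> q -> Rpower (INR n) (- (1 / s)) <= norm2 p q).

From Stdlib Require Import Reals List Lra Lia ZArith Bool.
Import ListNotations.
Open Scope R_scope.

(* Write [a_p] (resp. [b_p]) for the number of points of [P] on the line
   [p . q = alpha] (resp. [p . q = beta]), so that |Pi| = sum_p a_p b_p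
   <= sum_p (a_p^2 + b_p^2).  Cut the line [p . q = alpha] into M ~ n^(1/3)
   pieces by the coordinate along which it is least steep; two points in the
   same piece are at distance at most r ~ n^(-1/3), so Cauchy-Schwarz gives
   a_p^2 <= 4 M^2 + 2 M e_p, where e_p counts the ordered pairs of distinct
   points of the line at distance at most r.  Two distinct points q, q' lie on
   the lines [p . q = alpha] of at most one p (as alpha <> 0), hence
   sum_p e_p is at most the number of close pairs of P, which the energy
   bounds by K n^2 r^s.  Altogether
   |Pi| = O(n M^2 + M K n^2 r^s) = O(n^(5/3) + n^((7 - s)/3)) = O(n^(4/3 + 1/s)),
   without using the separation hypothesis. *)

Fixpoint nsum {A} (f : A -> nat) (l : list A) : nat :=
  match l with [] => 0%nat | x :: l' => (f x + nsum f l')%nat end.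

Definition cnt {A} (h : A -> bool) (l : list A) : nat := length (filter h l).

Section Counting.
Local Open Scope nat_scope.

Lemma nsum_app {A} (f : A -> nat) l1 l2 : nsum f (l1 ++ l2) = nsum f l1 + nsum f l2.
Proof. induction l1; simpl; lia. Qed.

Lemma nsum_map {A B} (f : B -> nat) (g : A -> B) l :
  nsum f (map g l) = nsum (fun x => f (g x)) l.
Proof. induction l; simpl; lia. Qed.

Lemma nsum_prod {A B} (f : A * B -> nat) l l' :
  nsum f (list_prod l l') = nsum (fun x => nsum (fun y => f (x, y)) l') l.
Proof. induction l; simpl; auto. rewrite nsum_app, nsum_map. lia. Qed.

Lemma nsum_le {A} (f g : A -> nat) l :
  (forall x, In x l -> f x <= g x) -> nsum f l <= nsum g l.
Proof.
  induction l as [|a l IH]; simpl; intros H; auto.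
  pose proof (H a (or_introl eq_refl)). specialize (IH (fun x Hx => H x (or_intror Hx))). lia.
Qed.

Lemma nsum_ext {A} (f g : A -> nat) l :
  (forall x, In x l -> f x = g x) -> nsum f l = nsum g l.
Proof. intros H. apply Nat.le_antisymm; apply nsum_le; intros x Hx; rewrite H; auto. Qed.

Lemma nsum_add {A} (f g : A -> nat) l : nsum (fun x => f x + g x) l = nsum f l + nsum g l.
Proof. induction l; simpl; lia. Qed.

Lemma nsum_mul_l {A} c (f : A -> nat) l : nsum (fun x => c * f x) l = c * nsum f l.
Proof. induction l; simpl; lia. Qed.

Lemma nsum_mul_r {A} c (f : A -> nat) l : nsum (fun x => f x * c) l = nsum f l * c.
Proof. induction l; simpl; lia. Qed.

Lemma nsum_const {A} c (l : list A) : nsum (fun _ => c) l = c * length l.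
Proof. induction l; simpl; lia. Qed.

Lemma nsum_swap {A B} (f : A -> B -> nat) l l' :
  nsum (fun x => nsum (f x) l') l = nsum (fun y => nsum (fun x => f x y) l) l'.
Proof.
  induction l; simpl.
  - rewrite nsum_const. lia.
  - rewrite IHl, <- nsum_add. reflexivity.
Qed.

Lemma nsum_filter {A} (f : A -> nat) h l :
  nsum f (filter h l) = nsum (fun x => if h x then f x else 0) l.
Proof. induction l; simpl; auto. destruct (h a); simpl; lia. Qed.

Lemma cnt_nsum {A} (h : A -> bool) l : cnt h l = nsum (fun x => Nat.b2n (h x)) l.
Proof. unfold cnt. induction l; simpl; auto. destruct (h a); simpl; lia. Qed.

Lemma nsum_sq_le {A} (f : A -> nat) l :
  nsum f l * nsum f l <= length l * nsum (fun x => f x * f x) l.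
Proof.
  induction l as [|a l IH]; simpl; auto.
  set (Sm := nsum f l) in *. set (Q := nsum (fun x => f x * f x) l) in *.
  set (L := length l) in *. clearbody Sm Q L.
  (* [2 L f a Sm <= L^2 f a^2 + Sm^2 <= L (L f a^2 + Q)] *)
  assert (H2 : 2 * f a * Sm <= L * f a * f a + Q).
  { destruct L as [|L'].
    - assert (Sm = 0) by nia. subst Sm. lia.
    - pose proof (Z.square_nonneg (Z.of_nat (S L') * Z.of_nat (f a) - Z.of_nat Sm)).
      assert (S L' * (2 * f a * Sm) <= S L' * (S L' * f a * f a + Q)) by nia.
      nia. }
  nia.
Qed.

Lemma nsum_b2n_eqb_seq m : forall a v, a <= v < a + m ->
  nsum (fun k => Nat.b2n (v =? k)) (seq a m) = 1.
Proof.
  induction m as [|m IH]; intros a v Hv; simpl; [lia|].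
  destruct (Nat.eqb_spec v a) as [->|Hne].
  - rewrite (nsum_ext _ (fun _ => 0)), nsum_const; [simpl; lia|].
    intros k Hk. apply in_seq in Hk. destruct (Nat.eqb_spec a k); [lia|reflexivity].
  - rewrite IH; [reflexivity|lia].
Qed.

(* Cauchy-Schwarz over the [M] bins of [bin]. *)
Lemma length_sq_le_same_bin {A} (bin : A -> nat) M l :
  (forall x, In x l -> bin x < M) ->
  length l * length l <= M * cnt (fun xy => bin (fst xy) =? bin (snd xy)) (list_prod l l).
Proof.
  intros Hbin.
  set (c := fun k => nsum (fun x => Nat.b2n (bin x =? k)) l).
  assert (Hlen : length l = nsum c (seq 0 M)).
  { rewrite <- (Nat.mul_1_l (length l)), <- nsum_const. unfold c. rewrite <- nsum_swap.
    apply nsum_ext. intros x Hx. rewrite nsum_b2n_eqb_seq; [reflexivity|].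
    specialize (Hbin x Hx). lia. }
  assert (Hpairs : cnt (fun xy => bin (fst xy) =? bin (snd xy)) (list_prod l l)
                   = nsum (fun k => c k * c k) (seq 0 M)).
  { rewrite cnt_nsum, nsum_prod. cbn [fst snd].
    transitivity (nsum (fun x => nsum (fun k => Nat.b2n (bin x =? k) * c k) (seq 0 M)) l).
    - apply nsum_ext; intros x Hx. unfold c. symmetry.
      rewrite (nsum_ext _ (fun k => nsum (fun y => Nat.b2n (bin x =? k) * Nat.b2n (bin y =? k)) l))
        by (intros k _; symmetry; apply nsum_mul_l).
      rewrite nsum_swap. apply nsum_ext; intros y _.
      rewrite (nsum_ext _ (fun k => Nat.b2n (bin y =? bin x) * Nat.b2n (bin x =? k))).
      + rewrite nsum_mul_l, nsum_b2n_eqb_seq by (specialize (Hbin x Hx); lia).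
        rewrite Nat.eqb_sym. lia.
      + intros k _. destruct (Nat.eqb_spec (bin x) k) as [->|]; simpl; lia.
    - rewrite nsum_swap. apply nsum_ext; intros k _. unfold c at 3. rewrite nsum_mul_r. reflexivity. }
  rewrite Hlen, Hpairs. pose proof (nsum_sq_le c (seq 0 M)) as H. rewrite length_seq in H. exact H.
Qed.

Lemma cnt_le_1 {A} (h : A -> bool) l : NoDup l ->
  (forall x y, In x l -> In y l -> h x = true -> h y = true -> x = y) -> cnt h l <= 1.
Proof.
  unfold cnt. induction 1 as [|a l Ha Hnd IH]; intros Hu; simpl; auto.
  destruct (h a) eqn:Eha; simpl.
  - enough (filter h l = []) as -> by reflexivity.
    destruct (filter h l) as [|y l'] eqn:E; auto.
    assert (Hy : In y (filter h l)) by (rewrite E; left; auto).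
    apply filter_In in Hy as [Hy Hhy].
    exfalso. apply Ha. replace a with y; auto. apply Hu; simpl; auto.
  - apply IH. intros; apply Hu; simpl; auto.
Qed.

Lemma cnt_or_le {A} (h h1 h2 : A -> bool) l :
  (forall x, In x l -> h x = true -> h1 x || h2 x = true) -> cnt h l <= cnt h1 l + cnt h2 l.
Proof.
  intros H. rewrite !cnt_nsum, <- nsum_add. apply nsum_le. intros x Hx.
  specialize (H x Hx). destruct (h x), (h1 x), (h2 x); simpl in *; lia || discriminate (H eq_refl).
Qed.

Lemma cnt_prod_filter {A} (f : A -> bool) (h : A * A -> bool) l :
  cnt h (list_prod (filter f l) (filter f l)) =
  nsum (fun xy => Nat.b2n (f (fst xy) && f (snd xy) && h xy)) (list_prod l l).
Proof.
  rewrite cnt_nsum, !nsum_prod, nsum_filter. apply nsum_ext; intros x _.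
  rewrite nsum_filter. cbn [fst snd]. destruct (f x); simpl.
  - apply nsum_ext; intros y _. destruct (f y); reflexivity.
  - rewrite nsum_const. lia.
Qed.

Lemma sq_le_of_sq_le_linear a M e : a * a <= M * a + M * e -> a * a <= 4 * M * M + 2 * M * e.
Proof. intros H. destruct (Nat.le_gt_cases a (2 * M)); nia. Qed.

End Counting.

Definition Rleb (a b : R) : bool := if Rle_dec a b then true else false.

Definition on_line (g : R) (p q : pt) : bool := Reqb (dot p q) g.

Definition close_pair (r : R) (qq : pt * pt) : bool :=
  negb (pt_eqb (fst qq) (snd qq)) && Rleb (norm2 (fst qq) (snd qq)) r.

(* The line [dot p q = g] makes an angle of at most 45 degrees with the axis of
   this coordinate, which therefore parametrises it up to a factor sqrt 2. *)
Definition line_coord (p q : pt) : R :=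
  if Rle_dec (Rabs (fst p)) (Rabs (snd p)) then fst q else snd q.

(* [x < up x <= x + 1] *)
Definition strip (B : nat) (p q : pt) : nat := Z.to_nat (up (INR B * line_coord p q)).

Lemma Reqb_eq a b : Reqb a b = true <-> a = b.
Proof. unfold Reqb. destruct (Req_EM_T a b); split; congruence. Qed.

Lemma pt_eqb_eq p q : pt_eqb p q = true <-> p = q.
Proof.
  destruct p as [a b], q as [c d]. unfold pt_eqb; cbn.
  rewrite andb_true_iff, !Reqb_eq. split; [intros [-> ->]; auto | intros H; inversion H; auto].
Qed.

Lemma pt_eqb_refl p : pt_eqb p p = true.
Proof. apply pt_eqb_eq. reflexivity. Qed.

Lemma Rleb_le a b : Rleb a b = true <-> a <= b.
Proof. unfold Rleb. destruct (Rle_dec a b); split; auto; congruence. Qed.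

Lemma line_coord_unit p q : in_unit_square q -> 0 <= line_coord p q <= 1.
Proof. unfold line_coord, in_unit_square. destruct (Rle_dec _ _); tauto. Qed.

Lemma strip_lt B p q : in_unit_square q -> (strip B p q < B + 2)%nat.
Proof.
  intros Hq. pose proof (line_coord_unit p q Hq). pose proof (pos_INR B). unfold strip.
  set (x := INR B * line_coord p q).
  assert (Hx : 0 <= x <= INR B) by (unfold x; nra).
  destruct (archimed x) as [_ Hup].
  assert (Hle : IZR (up x) <= IZR (Z.of_nat B + 1)) by (rewrite plus_IZR, <- INR_IZR_INZ; lra).
  apply le_IZR in Hle. lia.
Qed.

Lemma strip_eq_dist B p q q' : in_unit_square q -> in_unit_square q' ->
  strip B p q = strip B p q' -> Rabs (INR B * line_coord p q - INR B * line_coord p q') < 1.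
Proof.
  intros Hq Hq' E. pose proof (line_coord_unit p q Hq). pose proof (line_coord_unit p q' Hq').
  pose proof (pos_INR B). unfold strip in E.
  set (x := INR B * line_coord p q) in *. set (y := INR B * line_coord p q') in *.
  assert (0 <= x) by (unfold x; nra). assert (0 <= y) by (unfold y; nra).
  destruct (archimed x) as [Hx1 Hx2], (archimed y) as [Hy1 Hy2].
  assert (0 < up x)%Z by (apply lt_IZR; lra). assert (0 < up y)%Z by (apply lt_IZR; lra).
  apply Z2Nat.inj in E; try lia. rewrite E in *.
  unfold Rabs; destruct (Rcase_abs _); lra.
Qed.

Lemma sq_le_of_orthogonal a b u v : a * a <= b * b -> b <> 0 -> a * u + b * v = 0 -> v * v <= u * u.
Proof.
  intros Hab Hb Horth.
  assert (Hbv : (b * v) * (b * v) = (a * u) * (a * u)) by (replace (b * v) with (- (a * u)) by lra; ring).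
  assert (Hb2 : 0 < b * b) by (destruct (Rtotal_order b 0) as [|[|]]; [nra|contradiction|nra]).
  apply (Rmult_le_reg_l (b * b)); [exact Hb2|]. nra.
Qed.

Lemma dist_sq_on_line_le g p q q' : g <> 0 -> dot p q = g -> dot p q' = g ->
  (fst q - fst q') ^ 2 + (snd q - snd q') ^ 2 <= 2 * (line_coord p q - line_coord p q') ^ 2.
Proof.
  destruct p as [a b], q as [x y], q' as [x' y']. unfold dot, line_coord; cbn. intros Hg E E'.
  assert (Horth : a * (x - x') + b * (y - y') = 0) by lra.
  destruct (Rle_dec (Rabs a) (Rabs b)) as [Hab|Hab].
  - apply Rsqr_le_abs_1 in Hab. unfold Rsqr in Hab.
    assert (Hb : b <> 0) by (intros ->; apply Hg; rewrite <- E; nra).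
    pose proof (sq_le_of_orthogonal a b (x - x') (y - y') Hab Hb Horth). nra.
  - assert (Hba : Rabs b <= Rabs a) by lra.
    apply Rsqr_le_abs_1 in Hba. unfold Rsqr in Hba.
    assert (Ha : a <> 0) by (intros ->; rewrite Rabs_R0 in Hab; pose proof (Rabs_pos b); lra).
    assert (Horth' : b * (y - y') + a * (x - x') = 0) by lra.
    pose proof (sq_le_of_orthogonal b a (y - y') (x - x') Hba Ha Horth'). nra.
Qed.

Lemma norm2_le_of_same_strip g B r p q q' : g <> 0 -> 0 < r -> 2 <= r ^ 2 * INR B ^ 2 ->
  in_unit_square q -> in_unit_square q' -> dot p q = g -> dot p q' = g ->
  strip B p q = strip B p q' -> norm2 q q' <= r.
Proof.
  intros Hg Hr HrB Hq Hq' E E' Es.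
  pose proof (strip_eq_dist B p q q' Hq Hq' Es) as Hd.
  pose proof (dist_sq_on_line_le g p q q' Hg E E') as Hline.
  set (d := line_coord p q - line_coord p q') in *.
  replace (INR B * line_coord p q - INR B * line_coord p q') with (INR B * d) in Hd by (unfold d; ring).
  assert (HBd : INR B ^ 2 * d ^ 2 < 1).
  { replace (INR B ^ 2 * d ^ 2) with (Rabs (INR B * d) * Rabs (INR B * d))
      by (rewrite <- Rabs_mult, Rabs_right by nra; ring).
    pose proof (Rabs_pos (INR B * d)). nra. }
  set (X := (fst q - fst q') ^ 2 + (snd q - snd q') ^ 2) in *.
  assert (HX : X <= r * r) by nra.
  unfold norm2. fold X. rewrite <- (sqrt_square r) by lra. apply sqrt_le_1_alt. exact HX.
Qed.

Lemma on_line_unique g p p' q q' : g <> 0 -> q <> q' ->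
  dot p q = g -> dot p q' = g -> dot p' q = g -> dot p' q' = g -> p = p'.
Proof.
  destruct p as [a b], p' as [a' b'], q as [x y], q' as [x' y']. unfold dot; cbn.
  intros Hg Hq E1 E2 E3 E4.
  (* [p] and [p - p'] are both orthogonal to [q - q' <> 0], hence parallel; since
     [(p - p') . q = 0] while [p . q = g <> 0], [p - p' = 0]. *)
  set (u := a - a'). set (v := b - b').
  assert (Hpd : a * (x - x') + b * (y - y') = 0) by lra.
  assert (Hud : u * (x - x') + v * (y - y') = 0) by (unfold u, v; lra).
  assert (Huq : u * x + v * y = 0) by (unfold u, v; lra).
  assert (Hcross : a * v - b * u = 0).
  { destruct (Req_dec (x - x') 0) as [Hx|Hx].
    - assert (Hy : y - y' <> 0) by (intros Hy; apply Hq; f_equal; lra).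
      apply (Rmult_eq_reg_r (y - y')); [|exact Hy].
      replace ((a * v - b * u) * (y - y')) with (a * (u * (x - x') + v * (y - y')) - u * (a * (x - x') + b * (y - y'))) by ring.
      rewrite Hpd, Hud. ring.
    - apply (Rmult_eq_reg_r (x - x')); [|exact Hx].
      replace ((a * v - b * u) * (x - x')) with (v * (a * (x - x') + b * (y - y')) - b * (u * (x - x') + v * (y - y'))) by ring.
      rewrite Hpd, Hud. ring. }
  assert (Hu : u * g = 0).
  { rewrite <- E1. replace (u * (a * x + b * y)) with (a * (u * x + v * y) - y * (a * v - b * u)) by ring.
    rewrite Huq, Hcross. ring. }
  assert (Hv : v * g = 0).
  { rewrite <- E1. replace (v * (a * x + b * y)) with (b * (u * x + v * y) + x * (a * v - b * u)) by ring.
    rewrite Huq, Hcross. ring. }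
  apply Rmult_integral in Hu as [Hu|]; [|contradiction].
  apply Rmult_integral in Hv as [Hv|]; [|contradiction].
  unfold u, v in *. f_equal; lra.
Qed.

Lemma cnt_diag_le (l : list pt) : NoDup l ->
  (cnt (fun xy => pt_eqb (fst xy) (snd xy)) (list_prod l l) <= length l)%nat.
Proof.
  intros Hl. rewrite cnt_nsum, nsum_prod, <- (Nat.mul_1_l (length l)), <- nsum_const.
  apply nsum_le. intros x _. cbn [fst snd]. rewrite <- cnt_nsum.
  apply cnt_le_1; auto. intros y z _ _ Hy Hz.
  apply pt_eqb_eq in Hy, Hz. congruence.
Qed.

Section LineCounts.
Local Open Scope nat_scope.

Variables (g r : R) (B : nat) (P : list pt).
Hypothesis g_neq0 : g <> 0%R.
Hypothesis r_gt0 : (0 < r)%R.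
Hypothesis rB_ge : (2 <= r ^ 2 * INR B ^ 2)%R.
Hypothesis P_uniq : NoDup P.
Hypothesis P_square : forall q, In q P -> in_unit_square q.

Definition line_points (p : pt) : list pt := filter (on_line g p) P.

Definition line_close_pairs (p : pt) : nat :=
  cnt (close_pair r) (list_prod (line_points p) (line_points p)).

Lemma in_line_points p q : In q (line_points p) <-> In q P /\ dot p q = g.
Proof. unfold line_points, on_line. rewrite filter_In, Reqb_eq. reflexivity. Qed.

Lemma line_count_sq_le p :
  cnt (on_line g p) P * cnt (on_line g p) P <= 4 * (B + 2) * (B + 2) + 2 * (B + 2) * line_close_pairs p.
Proof.
  change (cnt (on_line g p) P) with (length (line_points p)).
  set (l := line_points p). set (same := fun xy : pt * pt => strip B p (fst xy) =? strip B p (snd xy)).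
  assert (Hcs : length l * length l <= (B + 2) * cnt same (list_prod l l)).
  { apply length_sq_le_same_bin. intros q Hq. apply strip_lt, P_square, (proj1 (in_line_points p q)), Hq. }
  assert (Hsplit : cnt same (list_prod l l) <=
                   cnt (fun xy => pt_eqb (fst xy) (snd xy)) (list_prod l l) + line_close_pairs p).
  { apply cnt_or_le. intros [q q'] Hqq Hs. apply in_prod_iff in Hqq as [Hq Hq'].
    apply in_line_points in Hq as [Hq Eq], Hq' as [Hq' Eq'].
    unfold same in Hs; cbn in *. apply Nat.eqb_eq in Hs.
    unfold close_pair; cbn. destruct (pt_eqb q q'); [reflexivity|].
    apply Rleb_le. apply (norm2_le_of_same_strip g B r p q q'); auto. }
  pose proof (cnt_diag_le l (NoDup_filter _ P_uniq)).
  apply sq_le_of_sq_le_linear. nia.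
Qed.

Lemma sum_line_close_pairs_le : nsum line_close_pairs P <= cnt (close_pair r) (list_prod P P).
Proof.
  unfold line_close_pairs, line_points.
  rewrite (nsum_ext _ _ _ (fun p _ => cnt_prod_filter _ _ _)), nsum_swap, cnt_nsum.
  apply nsum_le. intros [q q'] Hqq. cbn [fst snd].
  destruct (close_pair r (q, q')) eqn:Eclose.
  - rewrite (nsum_ext _ (fun p => Nat.b2n (on_line g p q && on_line g p q')))
      by (intros p _; rewrite andb_true_r; reflexivity).
    rewrite <- cnt_nsum. apply cnt_le_1; [exact P_uniq|].
    intros p p' _ _ Hp Hp'. apply andb_true_iff in Hp as [E1 E2], Hp' as [E3 E4].
    unfold on_line in *. apply Reqb_eq in E1, E2, E3, E4.
    apply (on_line_unique g p p' q q'); auto.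
    intros ->. unfold close_pair in Eclose. cbn in Eclose. rewrite pt_eqb_refl in Eclose. discriminate.
  - rewrite (nsum_ext _ (fun _ => 0)), nsum_const; [simpl; lia|].
    intros p _. rewrite andb_false_r. reflexivity.
Qed.

Lemma sum_line_count_sq_le :
  nsum (fun p => cnt (on_line g p) P * cnt (on_line g p) P) P <=
  4 * (B + 2) * (B + 2) * length P + 2 * (B + 2) * cnt (close_pair r) (list_prod P P).
Proof.
  pose proof sum_line_close_pairs_le.
  apply (Nat.le_trans _ (nsum (fun p => 4 * (B + 2) * (B + 2) + 2 * (B + 2) * line_close_pairs p) P)).
  - apply nsum_le. intros p _. apply line_count_sq_le.
  - rewrite nsum_add, nsum_const, nsum_mul_l. nia.
Qed.

End LineCounts.

Lemma Pi_card_eq_sum g1 g2 P :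
  Pi_card g1 g2 P = nsum (fun p => cnt (on_line g1 p) P * cnt (on_line g2 p) P)%nat P.
Proof.
  unfold Pi_card, Pi_set. change (length (filter ?h ?l)) with (cnt h l).
  rewrite cnt_nsum, !nsum_prod. apply nsum_ext; intros p _.
  rewrite (cnt_nsum (on_line g1 p)), <- nsum_mul_r. apply nsum_ext; intros q _.
  rewrite cnt_nsum, <- nsum_mul_l. apply nsum_ext; intros q' _.
  unfold on_line. destruct (Reqb (dot p q) g1), (Reqb (dot p q') g2); reflexivity.
Qed.

Lemma Pi_card_le_close_pairs alpha beta r B P : alpha <> 0 -> beta <> 0 -> 0 < r ->
  2 <= r ^ 2 * INR B ^ 2 -> NoDup P -> (forall q, In q P -> in_unit_square q) ->
  (Pi_card alpha beta P <=
   8 * (B + 2) * (B + 2) * length P + 4 * (B + 2) * cnt (close_pair r) (list_prod P P))%nat.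
Proof.
  intros Ha Hb Hr HrB HP Hsq. rewrite Pi_card_eq_sum.
  pose proof (sum_line_count_sq_le alpha r B P Ha Hr HrB HP Hsq).
  pose proof (sum_line_count_sq_le beta r B P Hb Hr HrB HP Hsq).
  enough (nsum (fun p => cnt (on_line alpha p) P * cnt (on_line beta p) P) P <=
          nsum (fun p => cnt (on_line alpha p) P * cnt (on_line alpha p) P
                       + cnt (on_line beta p) P * cnt (on_line beta p) P) P)%nat
    by (rewrite nsum_add in *; lia).
  apply nsum_le. intros p _. nia.
Qed.

Lemma norm2_pos q q' : q <> q' -> 0 < norm2 q q'.
Proof.
  destruct q as [a b], q' as [c d]. unfold norm2; cbn. intros Hne.
  apply sqrt_lt_R0.
  assert (Hd : a - c <> 0 \/ b - d <> 0).
  { destruct (Req_dec (a - c) 0), (Req_dec (b - d) 0); auto. exfalso. apply Hne. f_equal; lra. }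
  pose proof (pow2_ge_0 (a - c)). pose proof (pow2_ge_0 (b - d)).
  destruct Hd as [Hd|Hd]; apply Rsqr_pos_lt in Hd; unfold Rsqr in Hd; nra.
Qed.

Lemma sum_ge_mul_cnt {A} (f : A -> R) (h : A -> bool) c l : 0 <= c ->
  (forall x, In x l -> 0 <= f x) -> (forall x, In x l -> h x = true -> c <= f x) ->
  c * INR (cnt h l) <= fold_right Rplus 0 (map f l).
Proof.
  intros Hc. unfold cnt. induction l as [|a l IH]; cbn; intros Hf Hh; [lra|].
  specialize (IH (fun x Hx => Hf x (or_intror Hx)) (fun x Hx => Hh x (or_intror Hx))).
  pose proof (Hf a (or_introl eq_refl)).
  destruct (h a) eqn:Ea; cbn [length]; [rewrite S_INR|]; [pose proof (Hh a (or_introl eq_refl) Ea)|]; lra.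
Qed.

Lemma energy_term_nonneg s (qq : pt * pt) :
  0 <= (if pt_eqb (fst qq) (snd qq) then 0 else Rpower (norm2 (fst qq) (snd qq)) (- s)).
Proof. destruct (pt_eqb _ _); [lra|]. unfold Rpower. left. apply exp_pos. Qed.

Lemma energy_sum_nonneg s P : 0 <= energy_sum s P.
Proof.
  pose proof (sum_ge_mul_cnt _ (fun _ => false) 0 (list_prod P P) (Rle_refl 0)
                (fun qq _ => energy_term_nonneg s qq)) as H.
  unfold energy_sum. rewrite Rmult_0_l in H. apply H. discriminate.
Qed.

Lemma close_pairs_le_energy s r P : 0 < s -> 0 < r ->
  INR (cnt (close_pair r) (list_prod P P)) <= Rpower r s * energy_sum s P.
Proof.
  intros Hs Hr.
  assert (Hrs : 0 < Rpower r s) by apply exp_pos.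
  apply (Rmult_le_reg_l (/ Rpower r s)); [apply Rinv_0_lt_compat, Hrs|].
  rewrite <- Rmult_assoc, Rinv_l, Rmult_1_l by lra. rewrite <- Rpower_Ropp.
  apply sum_ge_mul_cnt.
  - left. apply exp_pos.
  - intros qq _. apply energy_term_nonneg.
  - intros [q q'] _ Hclose. unfold close_pair in Hclose; cbn in *.
    apply andb_true_iff in Hclose as [Hne Hle]. apply negb_true_iff in Hne. rewrite Hne.
    apply Rleb_le in Hle.
    assert (Hd : 0 < norm2 q q') by (apply norm2_pos; intros ->; rewrite pt_eqb_refl in Hne; discriminate).
    rewrite !Rpower_Ropp. apply Rinv_le_contravar; [apply exp_pos|].
    apply Rle_Rpower_l; lra.
Qed.

Lemma binomial_2 n : (2 <= n)%nat -> Binomial.C n 2 = INR n * (INR n - 1) / 2.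
Proof.
  intros H. destruct n as [|[|m]]; try lia. unfold Binomial.C.
  replace (S (S m) - 2)%nat with m by lia.
  change (fact (S (S m))) with (S (S m) * (S m * fact m))%nat.
  rewrite !mult_INR, !S_INR. change (fact 2) with 2%nat. cbn [INR].
  pose proof (INR_fact_neq_0 m). field. auto.
Qed.

Lemma adaptable_energy_le s K n P : (2 <= n)%nat -> s_adaptable s K n P ->
  energy_sum s P <= K * (INR n * (INR n - 1) / 2).
Proof.
  intros Hn (_ & _ & _ & HE & _).
  rewrite binomial_2 in HE by exact Hn.
  assert (Hn2 : 2 <= INR n) by (apply (le_INR 2); exact Hn).
  assert (HC : 0 < INR n * (INR n - 1) / 2) by nra.
  apply (Rmult_le_reg_l (/ (INR n * (INR n - 1) / 2))); [apply Rinv_0_lt_compat, HC|].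
  rewrite (Rmult_comm K), <- Rmult_assoc, Rinv_l, Rmult_1_l by lra. lra.
Qed.

Lemma adaptable_const_nonneg s K n P : (2 <= n)%nat -> s_adaptable s K n P -> 0 <= K.
Proof.
  intros Hn HP. pose proof (adaptable_energy_le s K n P Hn HP). pose proof (energy_sum_nonneg s P).
  assert (2 <= INR n) by (apply (le_INR 2); exact Hn).
  apply (Rmult_le_reg_r (INR n * (INR n - 1) / 2)); nra.
Qed.

Lemma energy_sum_le s K n P : (2 <= n)%nat -> s_adaptable s K n P ->
  energy_sum s P <= K * (INR n * INR n) / 2.
Proof.
  intros Hn HP. pose proof (adaptable_energy_le s K n P Hn HP).
  pose proof (adaptable_const_nonneg s K n P Hn HP). pose proof (pos_INR n). nra.
Qed.

Lemma Pi_card_le_energy s K n alpha beta r B P : 0 < s -> alpha <> 0 -> beta <> 0 -> 0 < r ->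
  2 <= r ^ 2 * INR B ^ 2 -> (2 <= n)%nat -> s_adaptable s K n P ->
  INR (Pi_card alpha beta P) <=
  8 * (INR B + 2) ^ 2 * INR n + 2 * (INR B + 2) * K * INR n ^ 2 * Rpower r s.
Proof.
  intros Hs Ha Hb Hr HrB Hn HP.
  pose proof (energy_sum_le s K n P Hn HP) as HE.
  destruct HP as (Huniq & Hlen & Hsq & _).
  pose proof (Pi_card_le_close_pairs alpha beta r B P Ha Hb Hr HrB Huniq Hsq) as Hcomb.
  apply le_INR in Hcomb. rewrite !plus_INR, !mult_INR, !plus_INR, Hlen in Hcomb.
  pose proof (close_pairs_le_energy s r P Hs Hr) as Hclose.
  assert (Hrs : 0 < Rpower r s) by apply exp_pos.
  pose proof (pos_INR B).
  assert (Hcl : 4 * (INR B + 2) * INR (cnt (close_pair r) (list_prod P P)) <=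
                4 * (INR B + 2) * (Rpower r s * (K * (INR n * INR n) / 2))).
  { apply Rmult_le_compat_l; [lra|]. apply (Rle_trans _ _ _ Hclose).
    apply Rmult_le_compat_l; lra. }
  cbn [INR] in Hcomb. nra.
Qed.

Lemma exponent_bounds s : 0 < s <= 3 -> 5 <= 4 + 3 / s /\ 7 - s <= 4 + 3 / s.
Proof.
  intros Hs. assert (Hu : s * (3 / s) = 3) by (field; lra).
  set (u := 3 / s) in *. clearbody u.
  assert (Hu0 : 0 < u) by nra.
  (* [(s + u)^2 = (s - u)^2 + 4 s u >= 12] *)
  assert (Hsum : 9 <= (s + u) * (s + u)) by nra.
  split; nra.
Qed.

Lemma Rpower_div_l a t s : 0 < a -> 0 < t -> Rpower (a / t) s = Rpower a s * Rpower t (- s).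
Proof.
  intros Ha Ht. unfold Rpower, Rdiv.
  rewrite ln_mult, ln_Rinv, <- exp_plus by (try apply Rinv_0_lt_compat; assumption). f_equal. ring.
Qed.

Lemma Rpower_two_div_le s t : 0 < s <= 3 -> 0 < t -> Rpower (2 / t) s <= 8 * Rpower t (- s).
Proof.
  intros Hs Ht. rewrite Rpower_div_l by lra.
  assert (H2s : Rpower 2 s <= Rpower 2 3) by (apply Rle_Rpower; lra).
  replace (Rpower 2 3) with 8 in H2s
    by (replace 3 with (INR 3) at 1 by (cbn; ring); rewrite Rpower_pow by lra; cbn; ring).
  assert (0 < Rpower t (- s)) by apply exp_pos. nra.
Qed.

Lemma cube_root_budget s K t M rho : 0 <= K -> 1 <= t -> 0 <= M <= 4 * t ->
  0 <= rho <= 8 * Rpower t (- s) ->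
  8 * M ^ 2 * Rpower t 3 + 2 * M * K * Rpower t 3 ^ 2 * rho <=
  128 * Rpower t 5 + 64 * K * Rpower t (7 - s).
Proof.
  intros HK Ht HM Hrho.
  assert (E5 : Rpower t 5 = t * t * Rpower t 3).
  { replace 5 with (1 + (1 + 3)) by ring. rewrite !Rpower_plus, Rpower_1 by lra. ring. }
  assert (E7 : Rpower t (7 - s) = t * Rpower t 3 ^ 2 * Rpower t (- s)).
  { replace (7 - s) with (1 + (3 + 3) + - s) by ring. rewrite !Rpower_plus, Rpower_1 by lra. ring. }
  assert (Ht3 : 0 < Rpower t 3) by apply exp_pos.
  assert (HKt : 0 <= K * Rpower t 3 ^ 2) by (apply Rmult_le_pos; [lra|apply pow2_ge_0]).
  rewrite E5, E7.
  assert (8 * M ^ 2 * Rpower t 3 <= 128 * (t * t * Rpower t 3))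
    by (assert (M ^ 2 <= 16 * (t * t)) by nra; nra).
  assert (M * rho <= (4 * t) * (8 * Rpower t (- s))) by (apply Rmult_le_compat; lra).
  nra.
Qed.

Lemma Pi_card_le_cube_root s K t n alpha beta P : 0 < s <= 3 -> alpha <> 0 -> beta <> 0 ->
  1 <= t -> INR n = Rpower t 3 -> (2 <= n)%nat -> s_adaptable s K n P ->
  INR (Pi_card alpha beta P) <= 128 * Rpower t 5 + 64 * K * Rpower t (7 - s).
Proof.
  intros Hs Ha Hb Ht Hn Hn2 HP.
  (* strips of width [1 / B] with [B = up t ~ n^(1/3)], and close pairs at distance [2 / t] *)
  destruct (archimed t) as [Hup1 Hup2].
  set (B := Z.to_nat (up t)).
  assert (HB : INR B = IZR (up t))
    by (unfold B; rewrite INR_IZR_INZ, Z2Nat.id; [reflexivity|apply le_IZR; lra]).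
  set (r := 2 / t).
  assert (Hr : 0 < r) by (unfold r; apply Rdiv_lt_0_compat; lra).
  assert (HrB : 2 <= r ^ 2 * INR B ^ 2).
  { assert (2 <= r * INR B) by (unfold r; apply (Rmult_le_reg_l t); [lra|]; field_simplify; lra).
    nra. }
  pose proof (Pi_card_le_energy s K n alpha beta r B P ltac:(lra) Ha Hb Hr HrB Hn2 HP) as H.
  rewrite Hn in H. eapply Rle_trans; [exact H|].
  apply cube_root_budget.
  - exact (adaptable_const_nonneg s K n P Hn2 HP).
  - exact Ht.
  - pose proof (pos_INR B). lra.
  - split; [left; apply exp_pos | apply Rpower_two_div_le; lra].
Qed.

Lemma Pi_card_le_power s K n alpha beta P : 0 < s <= 3 -> alpha <> 0 -> beta <> 0 ->
  (2 <= n)%nat -> s_adaptable s K n P ->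
  INR (Pi_card alpha beta P) <= (128 + 64 * K) * Rpower (INR n) (4 / 3 + 1 / s).
Proof.
  intros Hs Ha Hb Hn HP.
  assert (Hx : 1 <= INR n) by (apply (le_INR 1); lia).
  set (t := Rpower (INR n) (1 / 3)).
  assert (Ht : 1 <= t) by (unfold t; rewrite <- (Rpower_O (INR n)) at 1 by lra; apply Rle_Rpower; lra).
  assert (Htn : INR n = Rpower t 3)
    by (unfold t; rewrite Rpower_mult; replace (1 / 3 * 3) with 1 by field; rewrite Rpower_1; lra).
  assert (Hroot : Rpower (INR n) (4 / 3 + 1 / s) = Rpower t (4 + 3 / s))
    by (unfold t; rewrite Rpower_mult; f_equal; field; lra).
  pose proof (Pi_card_le_cube_root s K t n alpha beta P Hs Ha Hb Ht Htn Hn HP) as H.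
  pose proof (adaptable_const_nonneg s K n P Hn HP) as HK.
  destruct (exponent_bounds s Hs) as [E5 E7].
  pose proof (Rle_Rpower t _ _ Ht E5). pose proof (Rle_Rpower t _ _ Ht E7).
  rewrite Hroot. nra.
Qed.

Theorem theorem3 :
  forall (s alpha beta K : R),
    3 / 2 < s <= 2 -> 0 < alpha -> 0 < beta -> 0 < K ->
    forall (S : nat -> Prop) (Pn : nat -> list pt),
      (forall m : nat, exists n : nat, (m <= n)%nat /\ S n) ->
      (forall n : nat, S n -> s_adaptable s K n (Pn n)) ->
      exists (Cst : R) (N : nat), 0 < Cst /\ (0 < N)%nat /\
        forall n : nat, S n -> (N < n)%nat ->
          INR (Pi_card alpha beta (Pn n)) <= Cst * Rpower (INR n) (4 / 3 + 1 / s) * ln (INR n).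
Proof.
  intros s alpha beta K Hs Ha Hb HK S Pn _ HP.
  exists (128 + 64 * K), 2%nat. split; [lra|]. split; [lia|].
  intros n Sn Hn.
  pose proof (Pi_card_le_power s K n alpha beta (Pn n) ltac:(lra) ltac:(lra) ltac:(lra) ltac:(lia) (HP n Sn)).
  assert (Hx : 3 <= INR n) by (replace 3 with (INR 3) by (cbn; ring); apply le_INR; lia).
  assert (Hln : 1 <= ln (INR n)).
  { apply Rnot_lt_le. intros Hlt. apply exp_increasing in Hlt.
    rewrite exp_ln in Hlt by lra. pose proof exp_le_3. lra. }
  assert (0 <= (128 + 64 * K) * Rpower (INR n) (4 / 3 + 1 / s))
    by (apply Rmult_le_pos; [lra | left; apply exp_pos]).
  nra.
Qed.
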